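(* For every locale $X$, the category $FrmSh(X)$ of frame sheaves on $X$ and frame morphisms is equivalent to the coslice category $\mathcal{O}(X)/Frm$ of frames under $\mathcal{O}(X)$. The equivalence is given by the functor $\Phi:\mathcal{O}(X)/Frm\to FrmSh(X)$ sending a frame homomorphism $f:\mathcal{O}(X)\to L$ to the sheaf $\Phi(f)(u)=\{x\in L\mid x\le f(u)\}$ with restriction maps $x\mapsto x\wedge f(v)$ ($v\le u$), and a morphism $h:L\to M$ with $hf=g$ to its restrictions $\Phi(f)(u)\to\Phi(g)(u)$; a quasi-inverse is $\Psi:FrmSh(X)\to\mathcal{O}(X)/Frm$, $\Psi(F)=F(1_X)$ with the frame homomorphism $u\mapsto l_{u,1_X}(\top_{F(u)})$, and $\Psi(\alpha)=\alpha_{1_X}$.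
   Context: Let $X$ be a locale with frame of opens $\mathcal{O}(X)$ and top $1_X$. A posheaf on $X$ is a sheaf of sets $F$ with (POS1) each $F(u)$ a poset; (POS2) restriction maps $F(u)\to F(v)$, $x\mapsto x|_v$ ($v\le u$), order-preserving; (POS3) if $u=\bigvee_i u_i$ and $s,t\in F(u)$ satisfy $s|_{u_i}\le t|_{u_i}$ for all $i$, then $s\le t$. A frame sheaf is a posheaf $F$ such that each $F(u)$ is a frame, each restriction map $F(u)\to F(v)$ ($v\le u$) is surjective and has a left adjoint $l_{v,u}:F(v)\to F(u)$ and a right adjoint, and $x\wedge l_{v,u}(y)=l_{v,u}(x|_v\wedge y)$ for $x\in F(u)$, $y\in F(v)$. A frame morphism $\alpha:F\to G$ of frame sheaves is a morphism of sheaves such that each $\alpha_u$ is a frame homomorphism and $\alpha_u\circ l^F_{v,u}=l^G_{v,u}\circ\alpha_v$ for all $v\le u$. $\top_{F(u)}$ is the top element of $F(u)$. Objects of $\mathcal{O}(X)/Frm$ are frame homomorphisms $f:\mathcal{O}(X)\to L$; morphisms $f\to g$ (with $g:\mathcal{O}(X)\to M$) are frame homomorphisms $h:L\to M$ with $hf=g$. *)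

From Stdlib Require Import Classical.

Set Implicit Arguments.
Unset Strict Implicit.

Record FrameOps := {
  fcar :> Type;
  fle : fcar -> fcar -> Prop;
  fmeet : fcar -> fcar -> fcar;
  fsup : forall I : Type, (I -> fcar) -> fcar;
  ftop : fcar
}.

Arguments fle {f} _ _.
Arguments fmeet {f} _ _.
Arguments fsup {f} I _.
Arguments ftop {f}.

Record is_frame (L : FrameOps) : Prop := {
  fr_refl : forall x : L, fle x x;
  fr_trans : forall x y z : L, fle x y -> fle y z -> fle x z;
  fr_antisym : forall x y : L, fle x y -> fle y x -> x = y;
  fr_meet : forall x y z : L, fle z (fmeet x y) <-> (fle z x /\ fle z y);
  fr_top : forall x : L, fle x ftop;
  fr_sup : forall (I : Type) (g : I -> L) (z : L),
      fle (fsup I g) z <-> (forall i, fle (g i) z);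
  fr_distr : forall (x : L) (I : Type) (g : I -> L),
      fmeet x (fsup I g) = fsup I (fun i => fmeet x (g i))
}.

Record is_frame_hom (L M : FrameOps) (h : L -> M) : Prop := {
  fh_top : h ftop = ftop;
  fh_meet : forall x y : L, h (fmeet x y) = fmeet (h x) (h y);
  fh_sup : forall (I : Type) (g : I -> L), h (fsup I g) = fsup I (fun i => h (g i))
}.

Record is_poset (T : Type) (le : T -> T -> Prop) : Prop := {
  po_refl : forall x, le x x;
  po_trans : forall x y z, le x y -> le y z -> le x z;
  po_antisym : forall x y, le x y -> le y x -> x = y
}.

(** Data of a (pre)sheaf of frames: sections [sec u], restriction maps
    [res u v H : sec u -> sec v] for [H : v <= u], and the left adjoints
    [ladj u v H = l_{v,u} : sec v -> sec u]. *)
Record FSheaf (O : FrameOps) := {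
  sec : O -> FrameOps;
  res : forall u v : O, fle v u -> sec u -> sec v;
  ladj : forall u v : O, fle v u -> sec v -> sec u
}.

Arguments sec {O} f _.
Arguments res {O} f u v _ _.
Arguments ladj {O} f u v _ _.

Definition is_sheaf (O : FrameOps) (F : FSheaf O) : Prop :=
  (forall (u : O) (H : fle u u) (x : sec F u), res F u u H x = x) /\
  (forall (u v w : O) (H1 : fle v u) (H2 : fle w v) (H3 : fle w u) (x : sec F u),
      res F v w H2 (res F u v H1 x) = res F u w H3 x) /\
  (forall (u : O) (I : Type) (c : I -> O) (Hc : forall i, fle (c i) u),
      u = fsup I c ->
      forall s : forall i, sec F (c i),
      (forall i j (H1 : fle (fmeet (c i) (c j)) (c i)) (H2 : fle (fmeet (c i) (c j)) (c j)),
          res F (c i) _ H1 (s i) = res F (c j) _ H2 (s j)) ->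
      exists t : sec F u,
        (forall i, res F u (c i) (Hc i) t = s i) /\
        (forall t' : sec F u, (forall i, res F u (c i) (Hc i) t' = s i) -> t' = t)).

Definition is_posheaf (O : FrameOps) (F : FSheaf O) : Prop :=
  is_sheaf F /\
  (forall u : O, is_poset (@fle (sec F u))) /\
  (forall (u v : O) (H : fle v u) (x y : sec F u),
      fle x y -> fle (res F u v H x) (res F u v H y)) /\
  (forall (u : O) (I : Type) (c : I -> O) (Hc : forall i, fle (c i) u),
      u = fsup I c ->
      forall s t : sec F u, (forall i, fle (res F u (c i) (Hc i) s) (res F u (c i) (Hc i) t)) ->
      fle s t).

Definition is_frame_sheaf (O : FrameOps) (F : FSheaf O) : Prop :=
  is_posheaf F /\
  (forall u : O, is_frame (sec F u)) /\
  (forall (u v : O) (H : fle v u) (y : sec F v), exists x : sec F u, res F u v H x = y) /\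
  (forall (u v : O) (H : fle v u) (y : sec F v) (x : sec F u),
      fle (ladj F u v H y) x <-> fle y (res F u v H x)) /\
  (forall (u v : O) (H : fle v u), exists r : sec F v -> sec F u,
      forall (x : sec F u) (y : sec F v), fle (res F u v H x) y <-> fle x (r y)) /\
  (forall (u v : O) (H : fle v u) (x : sec F u) (y : sec F v),
      fmeet x (ladj F u v H y) = ladj F u v H (fmeet (res F u v H x) y)).

Definition is_fs_mor (O : FrameOps) (F G : FSheaf O)
    (a : forall u : O, sec F u -> sec G u) : Prop :=
  (forall u : O, is_frame_hom (a u)) /\
  (forall (u v : O) (H : fle v u) (x : sec F u), a v (res F u v H x) = res G u v H (a u x)) /\
  (forall (u v : O) (H : fle v u) (y : sec F v), a u (ladj F u v H y) = ladj G u v H (a v y)).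

Record FSh (O : FrameOps) := {
  fsd :> FSheaf O;
  fs_ok : is_frame_sheaf fsd
}.

Record FSMor (O : FrameOps) (F G : FSh O) := {
  fm :> forall u : O, sec F u -> sec G u;
  fm_ok : is_fs_mor fm
}.

Record CObj (O : FrameOps) := {
  cL : FrameOps;
  cf : O -> cL;
  cL_frame : is_frame cL;
  cf_hom : is_frame_hom cf
}.

Record CMor (O : FrameOps) (A B : CObj O) := {
  ch :> cL A -> cL B;
  ch_hom : is_frame_hom ch;
  ch_comm : forall u : O, ch (cf A u) = cf B u
}.

Lemma le_meet_l (L : FrameOps) (HL : is_frame L) (x y a : L) :
  fle x a -> fle (fmeet x y) a.
Proof.
  intro Hx. apply (fr_trans HL) with x; auto.
  apply (proj1 (fr_meet HL x y (fmeet x y)) (fr_refl HL _)).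
Qed.

Lemma le_meet_r (L : FrameOps) (HL : is_frame L) (x a : L) : fle (fmeet x a) a.
Proof. apply (proj1 (fr_meet HL x a (fmeet x a)) (fr_refl HL _)). Qed.

Lemma hom_mono (L M : FrameOps) (HL : is_frame L) (HM : is_frame M) (h : L -> M)
  (Hh : is_frame_hom h) (x y : L) : fle x y -> fle (h x) (h y).
Proof.
  intro Hxy.
  assert (E : x = fmeet x y).
  { apply (fr_antisym HL).
    - apply (fr_meet HL). split; [apply (fr_refl HL)| exact Hxy].
    - apply (le_meet_l HL). apply (fr_refl HL). }
  rewrite E, (fh_meet Hh). apply le_meet_r; exact HM.
Qed.

Lemma cmor_le (O : FrameOps) (A B : CObj O) (h : CMor A B) (u : O) (x : cL A) :
  fle x (cf A u) -> fle (h x) (cf B u).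
Proof.
  intro Hx. rewrite <- (ch_comm h u).
  exact (hom_mono (cL_frame A) (cL_frame B) (ch_hom h) Hx).
Qed.

Definition down_ops (L : FrameOps) (HL : is_frame L) (a : L) : FrameOps := {|
  fcar := { x : L | fle x a };
  fle := fun x y => fle (proj1_sig x) (proj1_sig y);
  fmeet := fun x y => exist _ (fmeet (proj1_sig x) (proj1_sig y))
                           (le_meet_l HL (proj1_sig y) (proj2_sig x));
  fsup := fun I g => exist _ (fsup I (fun i => proj1_sig (g i)))
                          (proj2 (@fr_sup L HL I (fun i => proj1_sig (g i)) a)
                                 (fun i => proj2_sig (g i)));
  ftop := exist (fun x => fle x a) a (fr_refl HL a)
|}.

(** Phi(f)(u) = {x in L | x <= f u}, restriction x |-> x /\ f v; the left adjoint
    of the restriction is the inclusion (left adjoints are unique). *)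
Definition Phi_data (O : FrameOps) (HO : is_frame O) (A : CObj O) : FSheaf O := {|
  sec := fun u => down_ops (cL_frame A) (cf A u);
  res := fun u v H x => exist _ (fmeet (proj1_sig x) (cf A v))
                             (le_meet_r (cL_frame A) (proj1_sig x) (cf A v));
  ladj := fun u v H y => exist _ (proj1_sig y)
             (fr_trans (cL_frame A) (proj2_sig y)
                (hom_mono HO (cL_frame A) (cf_hom A) H))
|}.

Definition Phi_mor (O : FrameOps) (HO : is_frame O) (A B : CObj O) (h : CMor A B) :
  forall u : O, sec (Phi_data HO A) u -> sec (Phi_data HO B) u :=
  fun u x => exist _ (h (proj1_sig x)) (cmor_le h (proj2_sig x)).

Definition Psi_L (O : FrameOps) (F : FSheaf O) : FrameOps := sec F ftop.

Definition Psi_f (O : FrameOps) (HO : is_frame O) (F : FSheaf O) : O -> Psi_L F :=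
  fun u => ladj F ftop u (fr_top HO u) ftop.

Definition Psi_mor (O : FrameOps) (F G : FSh O) (a : FSMor F G) : Psi_L F -> Psi_L G :=
  a ftop.

Arguments is_fs_mor {O} F G a.
Arguments Phi_mor {O} HO {A B} h u x.
Arguments Phi_data {O} HO A.
Arguments Psi_f {O} HO F u.

From Stdlib Require Import ProofIrrelevance FunctionalExtensionality.

(* [Phi f] is the sheaf of down-sets [u |-> {x | x <= f u}]: a compatible family
   glues to its join, and the sheaf axioms reduce to distributivity over the cover
   [f u = \/ f (c i)]; the right adjoint of [x |-> x /\ f v] is [y |-> f u /\ (f v => y)].
   Conversely, in a frame sheaf every restriction has both adjoints, hence is a frame
   homomorphism, and Frobenius gives [l (res x) = x /\ l top]; so [l_{u,1}] and [res_{1,u}]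
   identify [F u] with the down-set of [l_{u,1} top] in [F 1].  The map
   [u |-> l_{u,1} top] preserves joins by the separation axiom (POS3) and binary meets
   by gluing [top] on [u] with [l_{u/\v,v} top] on [v]. *)

Lemma proj1_sig_inj (A : Type) (P : A -> Prop) (x y : sig P) :
  proj1_sig x = proj1_sig y -> x = y.
Proof. apply eq_sig_hprop. intros; apply proof_irrelevance. Qed.

Section FrameFacts.
Context {L : FrameOps} (HL : is_frame L).

Lemma meet_lb_l (x y : L) : fle (fmeet x y) x.
Proof. exact (proj1 (proj1 (fr_meet HL x y _) (fr_refl HL _))). Qed.

Lemma meet_glb (x y z : L) : fle z x -> fle z y -> fle z (fmeet x y).
Proof. intros; apply (fr_meet HL); auto. Qed.

Lemma meet_mono (x y x' y' : L) : fle x x' -> fle y y' -> fle (fmeet x y) (fmeet x' y').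
Proof.
  intros Hx Hy. apply meet_glb.
  - exact (fr_trans HL (meet_lb_l x y) Hx).
  - exact (fr_trans HL (le_meet_r HL x y) Hy).
Qed.

Lemma meet_l (x y : L) : fle x y -> fmeet x y = x.
Proof.
  intro Hxy. apply (fr_antisym HL); [apply meet_lb_l|].
  apply meet_glb; [apply (fr_refl HL)|exact Hxy].
Qed.

Lemma meet_top_r (x : L) : fmeet x ftop = x.
Proof. apply meet_l, (fr_top HL). Qed.

Lemma meet_meet_of_le (x b c : L) : fle c b -> fmeet (fmeet x b) c = fmeet x c.
Proof.
  intro Hcb. apply (fr_antisym HL).
  - apply meet_mono; [apply meet_lb_l|apply (fr_refl HL)].
  - apply meet_glb; [apply meet_glb|]; auto using meet_lb_l, le_meet_r.
    exact (fr_trans HL (le_meet_r HL x c) Hcb).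
Qed.

Lemma meet_comm (x y : L) : fmeet x y = fmeet y x.
Proof. apply (fr_antisym HL); apply meet_glb; auto using meet_lb_l, le_meet_r. Qed.

Lemma meet_assoc (x y z : L) : fmeet x (fmeet y z) = fmeet (fmeet x y) z.
Proof.
  pose proof (fr_trans HL) as Htrans.
  apply (fr_antisym HL); repeat apply meet_glb; eauto using meet_lb_l, le_meet_r.
Qed.

Lemma meet_sup_distr_r (x : L) (I : Type) (g : I -> L) :
  fmeet (fsup I g) x = fsup I (fun i => fmeet (g i) x).
Proof.
  rewrite meet_comm, (fr_distr HL). f_equal.
  apply functional_extensionality; intro; apply meet_comm.
Qed.

Lemma sup_ub (I : Type) (g : I -> L) (i : I) : fle (g i) (fsup I g).
Proof. exact (proj1 (fr_sup HL g _) (fr_refl HL _) i). Qed.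

Lemma sup_lub (I : Type) (g : I -> L) (z : L) : (forall i, fle (g i) z) -> fle (fsup I g) z.
Proof. apply (fr_sup HL). Qed.

Definition himpl (a b : L) : L := fsup {z : L | fle (fmeet z a) b} (@proj1_sig _ _).

Lemma himplP (a b z : L) : fle z (himpl a b) <-> fle (fmeet z a) b.
Proof.
  split; intro Hz.
  - apply (fr_trans HL) with (fmeet (himpl a b) a).
    + apply meet_mono; [exact Hz|apply (fr_refl HL)].
    + unfold himpl. rewrite meet_sup_distr_r. apply sup_lub. intros [w Hw]; exact Hw.
  - exact (sup_ub _ (fun w : {w : L | fle (fmeet w a) b} => proj1_sig w) (exist _ z Hz)).
Qed.

Lemma down_frame (a : L) : is_frame (down_ops HL a).
Proof.
  constructor; simpl.
  - intros; apply (fr_refl HL).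
  - intros; eapply (fr_trans HL); eauto.
  - intros; apply proj1_sig_inj, (fr_antisym HL); auto.
  - intros; apply (fr_meet HL).
  - intros [x Hx]; exact Hx.
  - intros; apply (fr_sup HL).
  - intros; apply proj1_sig_inj, (fr_distr HL).
Qed.

End FrameFacts.

Lemma frame_hom_inverse {L M : FrameOps} {g : L -> M} {g' : M -> L} :
  is_frame_hom g -> (forall x, g (g' x) = x) -> (forall y, g' (g y) = y) ->
  is_frame_hom g'.
Proof.
  intros Hg gK g'K. constructor.
  - rewrite <- (fh_top Hg). apply g'K.
  - intros x y. rewrite <- (gK x) at 1. rewrite <- (gK y) at 1.
    rewrite <- (fh_meet Hg). apply g'K.
  - intros I h. replace h with (fun i => g (g' (h i))) at 1.
    + rewrite <- (fh_sup Hg). apply g'K.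
    + apply functional_extensionality; intro; apply gK.
Qed.

Section Phi.
Variables (O : FrameOps) (HO : is_frame O) (A : CObj O).
Local Notation f := (cf A).
Local Notation HL := (cL_frame A).

Lemma down_cover_eq {u : O} {I : Type} {c : I -> O} {x : cL A} :
  u = fsup I c -> fle x (f u) -> x = fsup I (fun i => fmeet x (f (c i))).
Proof.
  intros -> Hx. rewrite <- (fr_distr HL), <- (fh_sup (cf_hom A)).
  symmetry; apply (meet_l HL), Hx.
Qed.

Lemma Phi_sheaf : is_sheaf (Phi_data HO A).
Proof.
  split; [|split]; simpl.
  - intros u _ [x Hx]. apply proj1_sig_inj, (meet_l HL), Hx.
  - intros u v w _ Hwv _ [x Hx]. apply proj1_sig_inj; simpl.
    apply (meet_meet_of_le HL), (hom_mono HO HL (cf_hom A) Hwv).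
  - intros u I c Hc Hu s Hcomp.
    assert (Hs : forall i, fle (proj1_sig (s i)) (f u)).
    { intro i. apply (fr_trans HL (proj2_sig (s i))), (hom_mono HO HL (cf_hom A) (Hc i)). }
    exists (exist (fun x => fle x (f u)) _ (sup_lub HL _ _ _ Hs)). split.
    + intro i. apply proj1_sig_inj; simpl. apply (fr_antisym HL).
      * rewrite (meet_sup_distr_r HL). apply (sup_lub HL). intro j.
        pose proof (f_equal (@proj1_sig _ _)
          (Hcomp i j (meet_lb_l HO _ _) (le_meet_r HO _ _))) as Eij; simpl in Eij.
        apply (fr_trans HL) with (fmeet (proj1_sig (s j)) (f (fmeet (c i) (c j)))).
        -- rewrite (fh_meet (cf_hom A)). apply (meet_glb HL); [apply (meet_lb_l HL)|].
           apply (meet_glb HL); [apply (le_meet_r HL)|].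
           apply (fr_trans HL (meet_lb_l HL _ _)), (proj2_sig (s j)).
        -- rewrite <- Eij. apply (meet_lb_l HL).
      * apply (meet_glb HL); [apply (sup_ub HL _ (fun j => proj1_sig (s j)))|].
        exact (proj2_sig (s i)).
    + intros [t Ht] Hglue. apply proj1_sig_inj; simpl.
      rewrite (down_cover_eq Hu Ht). f_equal. apply functional_extensionality; intro i.
      exact (f_equal (@proj1_sig _ _) (Hglue i)).
Qed.

Lemma Phi_posheaf : is_posheaf (Phi_data HO A).
Proof.
  split; [exact Phi_sheaf|split; [|split]]; simpl.
  - intro u. pose proof (down_frame HL (f u)) as Hu.
    constructor; [exact (fr_refl Hu)|exact (fr_trans Hu)|exact (fr_antisym Hu)].
  - intros u v _ [x Hx] [y Hy] Hxy. apply (meet_mono HL); [exact Hxy|apply (fr_refl HL)].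
  - intros u I c _ Hu [x Hx] [y Hy] Hxy; simpl in *.
    rewrite (down_cover_eq Hu Hx). apply (sup_lub HL); intro i.
    apply (fr_trans HL (Hxy i)), (meet_lb_l HL).
Qed.

Lemma Phi_frame_sheaf : is_frame_sheaf (Phi_data HO A).
Proof.
  assert (Hmono : forall u v : O, fle v u -> fle (f v) (f u))
    by (intros u v; apply (hom_mono HO HL (cf_hom A))).
  split; [exact Phi_posheaf|split; [|split; [|split; [|split]]]]; simpl.
  - intro u; apply down_frame.
  - intros u v Hvu [y Hy].
    exists (exist (fun x => fle x (f u)) y (fr_trans HL Hy (Hmono u v Hvu))).
    apply proj1_sig_inj, (meet_l HL), Hy.
  - intros u v _ [y Hy] [x Hx]; simpl. split; intro Hyx.
    + apply (meet_glb HL); assumption.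
    + apply (fr_trans HL Hyx), (meet_lb_l HL).
  - intros u v _.
    exists (fun y => exist (fun x => fle x (f u)) (fmeet (f u) (himpl (f v) (proj1_sig y)))
                      (meet_lb_l HL _ _)).
    intros [x Hx] [y Hy]; simpl. rewrite (fr_meet HL), (himplP HL). tauto.
  - intros u v Hvu [x Hx] [y Hy]. apply proj1_sig_inj; simpl.
    rewrite <- (meet_assoc HL), (meet_comm HL (f v) y), (meet_l HL _ _ Hy). reflexivity.
Qed.

Lemma Phi_mor_fs_mor (B : CObj O) (h : CMor A B) :
  is_fs_mor (Phi_data HO A) (Phi_data HO B) (Phi_mor HO h).
Proof.
  split; [|split].
  - intro u. constructor; intros; apply proj1_sig_inj; simpl.
    + apply (ch_comm h).
    + apply (fh_meet (ch_hom h)).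
    + apply (fh_sup (ch_hom h)).
  - intros; apply proj1_sig_inj; simpl. rewrite (fh_meet (ch_hom h)), (ch_comm h). reflexivity.
  - intros; apply proj1_sig_inj; reflexivity.
Qed.

End Phi.

Section FrameSheafFacts.
Context {O : FrameOps} {F : FSheaf O} (HF : is_frame_sheaf F).

Lemma sec_frame (u : O) : is_frame (sec F u).
Proof. exact (proj1 (proj2 HF) u). Qed.

Lemma res_id {u : O} (H : fle u u) (x : sec F u) : res F u u H x = x.
Proof. exact (proj1 (proj1 (proj1 HF)) u H x). Qed.

Lemma res_comp {u v w : O} (Hvu : fle v u) (Hwv : fle w v) (Hwu : fle w u) (x : sec F u) :
  res F v w Hwv (res F u v Hvu x) = res F u w Hwu x.
Proof. exact (proj1 (proj2 (proj1 (proj1 HF))) u v w Hvu Hwv Hwu x). Qed.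

Lemma res_glue (u : O) (I : Type) (c : I -> O) (Hc : forall i, fle (c i) u) :
  u = fsup I c -> forall s : forall i, sec F (c i),
  (forall i j (H1 : fle (fmeet (c i) (c j)) (c i)) (H2 : fle (fmeet (c i) (c j)) (c j)),
      res F (c i) _ H1 (s i) = res F (c j) _ H2 (s j)) ->
  exists t : sec F u, forall i, res F u (c i) (Hc i) t = s i.
Proof.
  intros Hu s Hs.
  destruct (proj2 (proj2 (proj1 (proj1 HF))) u I c Hc Hu s Hs) as [t [Ht _]].
  exists t; exact Ht.
Qed.

Lemma res_mono {u v : O} (H : fle v u) (x y : sec F u) :
  fle x y -> fle (res F u v H x) (res F u v H y).
Proof. exact (proj1 (proj2 (proj2 (proj1 HF))) u v H x y). Qed.

Lemma res_le_cover (u : O) (I : Type) (c : I -> O) (Hc : forall i, fle (c i) u) :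
  u = fsup I c -> forall s t : sec F u,
  (forall i, fle (res F u (c i) (Hc i) s) (res F u (c i) (Hc i) t)) -> fle s t.
Proof. exact (proj2 (proj2 (proj2 (proj1 HF))) u I c Hc). Qed.

Lemma res_surj {u v : O} (H : fle v u) (y : sec F v) : exists x, res F u v H x = y.
Proof. exact (proj1 (proj2 (proj2 HF)) u v H y). Qed.

Lemma ladj_adj {u v : O} (H : fle v u) (y : sec F v) (x : sec F u) :
  fle (ladj F u v H y) x <-> fle y (res F u v H x).
Proof. exact (proj1 (proj2 (proj2 (proj2 HF))) u v H y x). Qed.

Lemma res_radj {u v : O} (H : fle v u) : exists r : sec F v -> sec F u,
  forall (x : sec F u) (y : sec F v), fle (res F u v H x) y <-> fle x (r y).
Proof. exact (proj1 (proj2 (proj2 (proj2 (proj2 HF)))) u v H). Qed.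

Lemma ladj_frobenius {u v : O} (H : fle v u) (x : sec F u) (y : sec F v) :
  fmeet x (ladj F u v H y) = ladj F u v H (fmeet (res F u v H x) y).
Proof. exact (proj2 (proj2 (proj2 (proj2 (proj2 HF)))) u v H x y). Qed.

Lemma res_ladj {u v : O} (H : fle v u) (y : sec F v) : res F u v H (ladj F u v H y) = y.
Proof.
  apply (fr_antisym (sec_frame v)).
  - destruct (res_surj H y) as [x <-]. apply res_mono, ladj_adj, (fr_refl (sec_frame v)).
  - apply ladj_adj, (fr_refl (sec_frame u)).
Qed.

Lemma ladj_mono {u v : O} (H : fle v u) (y y' : sec F v) :
  fle y y' -> fle (ladj F u v H y) (ladj F u v H y').
Proof. intro Hyy'. apply ladj_adj. rewrite res_ladj. exact Hyy'. Qed.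

Lemma ladj_res {u v : O} (H : fle v u) (x : sec F u) :
  ladj F u v H (res F u v H x) = fmeet x (ladj F u v H ftop).
Proof. rewrite ladj_frobenius, (meet_top_r (sec_frame v)). reflexivity. Qed.

Lemma ladj_id {u : O} (H : fle u u) (y : sec F u) : ladj F u u H y = y.
Proof. rewrite <- (res_id H (ladj F u u H y)). apply res_ladj. Qed.

Lemma ladj_comp {u v w : O} (Hvu : fle v u) (Hwv : fle w v) (Hwu : fle w u) (y : sec F w) :
  ladj F u v Hvu (ladj F v w Hwv y) = ladj F u w Hwu y.
Proof.
  apply (fr_antisym (sec_frame u)).
  - apply ladj_adj, ladj_adj. rewrite (res_comp Hvu Hwv Hwu), res_ladj.
    apply (fr_refl (sec_frame w)).
  - apply ladj_adj. rewrite <- (res_comp Hvu Hwv Hwu), !res_ladj. apply (fr_refl (sec_frame w)).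
Qed.

Lemma res_frame_hom {u v : O} (H : fle v u) : is_frame_hom (res F u v H).
Proof.
  pose proof (sec_frame u) as Hu; pose proof (sec_frame v) as Hv.
  constructor.
  - apply (fr_antisym Hv); [apply (fr_top Hv)|].
    destruct (res_surj H ftop) as [x <-]. apply res_mono, (fr_top Hu).
  - intros x y. apply (fr_antisym Hv).
    + apply (meet_glb Hv); apply res_mono; [apply (meet_lb_l Hu)|apply (le_meet_r Hu)].
    + apply ladj_adj, (meet_glb Hu); apply ladj_adj; [apply (meet_lb_l Hv)|apply (le_meet_r Hv)].
  - intros I g. destruct (res_radj H) as [r Hr]. apply (fr_antisym Hv).
    + apply Hr, (sup_lub Hu); intro i. apply Hr, (sup_ub Hv _ (fun i => res F u v H (g i))).
    + apply (sup_lub Hv); intro i. apply res_mono, (sup_ub Hu).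
Qed.

Lemma res_top {u v : O} (H : fle v u) : res F u v H ftop = ftop.
Proof. exact (fh_top (res_frame_hom H)). Qed.

End FrameSheafFacts.

Section Psi.
Context {O : FrameOps} (HO : is_frame O) {F : FSheaf O} (HF : is_frame_sheaf F).

Lemma res_ladj_top_le_meet (w u v : O) (Huw : fle u w) (Hvw : fle v w) (Hmv : fle (fmeet u v) v) :
  fle (res F w v Hvw (ladj F w u Huw ftop)) (ladj F v (fmeet u v) Hmv ftop).
Proof.
  set (c := fun b : bool => if b then u else v).
  set (s := fun b : bool => if b return sec F (c b) then ftop else ladj F v (fmeet u v) Hmv ftop).
  assert (Hc : forall b, fle (c b) (fsup bool c)) by apply (sup_ub HO).
  assert (Hbelow : forall z (Hzm : fle z (fmeet u v)) (Hzv : fle z v),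
             res F v z Hzv (ladj F v (fmeet u v) Hmv ftop) = ftop).
  { intros z Hzm Hzv. rewrite <- (res_comp HF Hmv Hzm Hzv), (res_ladj HF). apply (res_top HF). }
  destruct (res_glue HF (fsup bool c) bool c Hc eq_refl s) as [t Ht].
  { intros [|] [|] H1 H2; simpl in *.
    - f_equal; apply proof_irrelevance.
    - rewrite (res_top HF). symmetry; apply Hbelow, (fr_refl HO).
    - rewrite (res_top HF). apply Hbelow.
      apply (meet_glb HO); [apply (le_meet_r HO)|apply (meet_lb_l HO)].
    - f_equal; apply proof_irrelevance. }
  assert (Hjw : fle (fsup bool c) w) by (apply (sup_lub HO); intros [|]; assumption).
  apply (fr_trans (sec_frame HF v)) with (res F w v Hvw (ladj F w _ Hjw t)).
  - apply (res_mono HF), (ladj_adj HF).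
    rewrite <- (res_comp HF Hjw (Hc true) Huw), (res_ladj HF), (Ht true).
    apply (fr_refl (sec_frame HF u)).
  - rewrite <- (res_comp HF Hjw (Hc false) Hvw), (res_ladj HF), (Ht false).
    apply (fr_refl (sec_frame HF v)).
Qed.

Lemma res_Psi_f (u : O) (H : fle u ftop) : res F ftop u H (Psi_f HO F u) = ftop.
Proof. unfold Psi_f. rewrite (proof_irrelevance _ H (fr_top HO u)). apply (res_ladj HF). Qed.

Lemma Psi_f_le (u : O) (x : sec F ftop) :
  fle (Psi_f HO F u) x <-> fle ftop (res F ftop u (fr_top HO u) x).
Proof. apply (ladj_adj HF). Qed.

Lemma Psi_f_mono (u v : O) : fle u v -> fle (Psi_f HO F u) (Psi_f HO F v).
Proof.
  intro Huv. apply Psi_f_le.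
  rewrite <- (res_comp HF (fr_top HO v) Huv (fr_top HO u)), res_Psi_f, (res_top HF).
  apply (fr_refl (sec_frame HF u)).
Qed.

Lemma Psi_f_meet (u v : O) : Psi_f HO F (fmeet u v) = fmeet (Psi_f HO F u) (Psi_f HO F v).
Proof.
  pose proof (sec_frame HF ftop) as H1.
  assert (Hmv : fle (fmeet u v) v) by apply (le_meet_r HO).
  apply (fr_antisym H1).
  - apply (meet_glb H1); apply Psi_f_mono; [apply (meet_lb_l HO)|exact Hmv].
  - unfold Psi_f, Psi_L; cbv beta.
    rewrite (ladj_frobenius HF), (meet_top_r (sec_frame HF v)),
      <- (ladj_comp HF (fr_top HO v) Hmv (fr_top HO (fmeet u v))).
    apply (ladj_mono HF), res_ladj_top_le_meet.
Qed.

Lemma Psi_f_sup (I : Type) (c : I -> O) :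
  Psi_f HO F (fsup I c) = fsup I (fun i => Psi_f HO F (c i)).
Proof.
  pose proof (sec_frame HF ftop) as H1.
  assert (Hc : forall i, fle (c i) (fsup I c)) by apply (sup_ub HO).
  apply (fr_antisym H1).
  - apply Psi_f_le, (res_le_cover HF _ I c Hc eq_refl). intro i.
    rewrite (res_top HF), (res_comp HF _ _ (fr_top HO (c i))),
      <- (res_Psi_f (c i) (fr_top HO (c i))).
    apply (res_mono HF), (sup_ub H1 _ (fun i => Psi_f HO F (c i))).
  - apply (sup_lub H1); intro i. apply Psi_f_mono, Hc.
Qed.

Lemma Psi_f_hom : is_frame_hom (Psi_f HO F).
Proof.
  constructor.
  - apply (ladj_id HF).
  - apply Psi_f_meet.
  - apply Psi_f_sup.
Qed.

End Psi.

Lemma fs_mor_inverse {O : FrameOps} {F G : FSheaf O}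
  {a : forall u, sec F u -> sec G u} {b : forall u, sec G u -> sec F u} :
  is_fs_mor F G a -> (forall u x, a u (b u x) = x) -> (forall u y, b u (a u y) = y) ->
  is_fs_mor G F b.
Proof.
  intros [Ha_hom [Ha_res Ha_ladj]] abK baK. split; [|split].
  - intro u. exact (frame_hom_inverse (Ha_hom u) (abK u) (baK u)).
  - intros u v H x. rewrite <- (baK v (res F u v H (b u x))), Ha_res, !abK. reflexivity.
  - intros u v H y. rewrite <- (baK u (ladj F u v H (b v y))), Ha_ladj, !abK. reflexivity.
Qed.

Section PsiMor.
Context {O : FrameOps} (HO : is_frame O).

Lemma Psi_mor_frame_hom {F G : FSh O} (a : FSMor F G) : is_frame_hom (Psi_mor a).
Proof. exact (proj1 (fm_ok a) ftop). Qed.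

Lemma Psi_mor_Psi_f {F G : FSh O} (a : FSMor F G) (u : O) :
  Psi_mor a (Psi_f HO F u) = Psi_f HO G u.
Proof.
  destruct (fm_ok a) as [Ha_hom [_ Ha_ladj]].
  unfold Psi_mor, Psi_f. rewrite Ha_ladj, (fh_top (Ha_hom u)). reflexivity.
Qed.

End PsiMor.

Section PsiPhi.
Context {O : FrameOps} (HO : is_frame O).

Lemma le_cf_top {A : CObj O} (x : cL A) : fle x (cf A ftop).
Proof. rewrite (fh_top (cf_hom A)). apply (fr_top (cL_frame A)). Qed.

Definition PsiPhi_to {A : CObj O} (x : Psi_L (Phi_data HO A)) : cL A := proj1_sig x.

Definition PsiPhi_from {A : CObj O} (x : cL A) : Psi_L (Phi_data HO A) :=
  exist (fun y => fle y (cf A ftop)) x (le_cf_top x).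

Lemma PsiPhi_to_from (A : CObj O) (x : cL A) : PsiPhi_to (PsiPhi_from x) = x.
Proof. reflexivity. Qed.

Lemma PsiPhi_from_to (A : CObj O) (y : Psi_L (Phi_data HO A)) :
  PsiPhi_from (PsiPhi_to y) = y.
Proof. apply proj1_sig_inj; reflexivity. Qed.

Lemma PsiPhi_to_hom (A : CObj O) : is_frame_hom (@PsiPhi_to A).
Proof. constructor; try reflexivity. exact (fh_top (cf_hom A)). Qed.

Lemma PsiPhi_from_hom (A : CObj O) : is_frame_hom (@PsiPhi_from A).
Proof. exact (frame_hom_inverse (PsiPhi_to_hom A) (PsiPhi_to_from A) (PsiPhi_from_to A)). Qed.

End PsiPhi.

Section PhiPsi.
Context {O : FrameOps} (HO : is_frame O) (F : FSh O).
Let HF := fs_ok F.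

Definition PhiPsi_to {u : O} (x : {x : Psi_L F | fle x (Psi_f HO F u)}) : sec F u :=
  res F ftop u (fr_top HO u) (proj1_sig x).

Definition PhiPsi_from {u : O} (y : sec F u) : {x : Psi_L F | fle x (Psi_f HO F u)} :=
  exist (fun x => fle x (Psi_f HO F u)) (ladj F ftop u (fr_top HO u) y)
    (ladj_mono HF (fr_top HO u) y ftop (fr_top (sec_frame HF u) y)).

Lemma PhiPsi_to_from (u : O) (y : sec F u) : PhiPsi_to (PhiPsi_from y) = y.
Proof. apply (res_ladj HF). Qed.

Lemma PhiPsi_from_to (u : O) (x : {x : Psi_L F | fle x (Psi_f HO F u)}) :
  PhiPsi_from (PhiPsi_to x) = x.
Proof.
  destruct x as [x Hx]. apply proj1_sig_inj. unfold PhiPsi_to; simpl.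
  rewrite (ladj_res HF). apply (meet_l (sec_frame HF ftop)), Hx.
Qed.

Lemma PhiPsi_to_fs_mor (H1 : is_frame (Psi_L F)) (H2 : is_frame_hom (Psi_f HO F)) :
  is_fs_mor (Phi_data HO (Build_CObj H1 H2)) F (@PhiPsi_to).
Proof.
  split; [|split]; unfold PhiPsi_to; simpl; unfold Psi_L.
  - intro u. pose proof (res_frame_hom HF (fr_top HO u)) as Hres. constructor; simpl.
    + apply (res_Psi_f HO HF).
    + intros; apply (fh_meet Hres).
    + intros; apply (fh_sup Hres).
  - intros u v H [x Hx]; simpl.
    rewrite (fh_meet (res_frame_hom HF _)), (res_Psi_f HO HF), (meet_top_r (sec_frame HF v)).
    symmetry; apply (res_comp HF).
  - intros u v H [y Hy]; simpl.
    set (z := res F ftop u (fr_top HO u) y).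
    assert (Hz : fle z (ladj F u v H ftop)).
    { rewrite <- (res_ladj HF (fr_top HO u) (ladj F u v H ftop)),
        (ladj_comp HF _ _ (fr_top HO v)).
      apply (res_mono HF), Hy. }
    rewrite <- (res_comp HF (fr_top HO u) H (fr_top HO v)). fold z.
    rewrite (ladj_res HF). symmetry; apply (meet_l (sec_frame HF u)), Hz.
Qed.

Lemma PhiPsi_from_fs_mor (H1 : is_frame (Psi_L F)) (H2 : is_frame_hom (Psi_f HO F)) :
  is_fs_mor F (Phi_data HO (Build_CObj H1 H2)) (@PhiPsi_from).
Proof. exact (fs_mor_inverse (PhiPsi_to_fs_mor H1 H2) PhiPsi_to_from PhiPsi_from_to). Qed.

End PhiPsi.

Theorem theorem3p1 (O : FrameOps) (HO : is_frame O) :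
  (forall A : CObj O, is_frame_sheaf (Phi_data HO A)) /\
  (forall (A B : CObj O) (h : CMor A B),
      is_fs_mor (Phi_data HO A) (Phi_data HO B) (Phi_mor HO h)) /\
  (forall F : FSh O, is_frame (Psi_L F) /\ is_frame_hom (Psi_f HO F)) /\
  (forall (F G : FSh O) (a : FSMor F G),
      is_frame_hom (Psi_mor a) /\ (forall u : O, Psi_mor a (Psi_f HO F u) = Psi_f HO G u)) /\
  (exists (eta : forall A : CObj O, Psi_L (Phi_data HO A) -> cL A)
          (eta' : forall A : CObj O, cL A -> Psi_L (Phi_data HO A)),
      (forall A : CObj O,
          is_frame_hom (eta A) /\ (forall u : O, eta A (Psi_f HO (Phi_data HO A) u) = cf A u) /\
          is_frame_hom (eta' A) /\ (forall u : O, eta' A (cf A u) = Psi_f HO (Phi_data HO A) u) /\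
          (forall x, eta A (eta' A x) = x) /\ (forall y, eta' A (eta A y) = y)) /\
      (forall (A B : CObj O) (h : CMor A B) (x : Psi_L (Phi_data HO A)),
          eta B (Phi_mor HO h ftop x) = h (eta A x))) /\
  (exists (eps : forall (F : FSh O) (u : O),
              {x : Psi_L F | fle x (Psi_f HO F u)} -> sec F u)
          (eps' : forall (F : FSh O) (u : O),
              sec F u -> {x : Psi_L F | fle x (Psi_f HO F u)}),
      (forall (F : FSh O) (H1 : is_frame (Psi_L F)) (H2 : is_frame_hom (Psi_f HO F)),
          is_fs_mor (Phi_data HO (Build_CObj H1 H2)) F (eps F) /\
          is_fs_mor F (Phi_data HO (Build_CObj H1 H2)) (eps' F) /\
          (forall u x, eps F u (eps' F u x) = x) /\
          (forall u y, eps' F u (eps F u y) = y)) /\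
      (forall (F G : FSh O) (a : FSMor F G)
              (H1 : is_frame (Psi_L F)) (H2 : is_frame_hom (Psi_f HO F))
              (G1 : is_frame (Psi_L G)) (G2 : is_frame_hom (Psi_f HO G))
              (Ha1 : is_frame_hom (Psi_mor a))
              (Ha2 : forall u : O, Psi_mor a (Psi_f HO F u) = Psi_f HO G u)
              (u : O) (x : {x : Psi_L F | fle x (Psi_f HO F u)}),
          eps G u (Phi_mor HO (Build_CMor (A := Build_CObj H1 H2) (B := Build_CObj G1 G2)
                                  Ha1 Ha2) u x)
          = a u (eps F u x))).
Proof.
  split; [|split; [|split; [|split; [|split]]]].
  - apply Phi_frame_sheaf.
  - apply Phi_mor_fs_mor.
  - intro F. exact (conj (sec_frame (fs_ok F) ftop) (Psi_f_hom HO (fs_ok F))).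
  - intros F G a. exact (conj (Psi_mor_frame_hom a) (Psi_mor_Psi_f HO a)).
  - exists (@PsiPhi_to O HO), (@PsiPhi_from O HO). split; [|reflexivity].
    intro A. split; [|split; [|split; [|split; [|split]]]].
    + apply PsiPhi_to_hom.
    + reflexivity.
    + apply PsiPhi_from_hom.
    + intro u; apply proj1_sig_inj; reflexivity.
    + apply PsiPhi_to_from.
    + apply PsiPhi_from_to.
  - exists (@PhiPsi_to O HO), (@PhiPsi_from O HO). split.
    + intros F H1 H2. split; [|split; [|split]].
      * apply PhiPsi_to_fs_mor.
      * apply PhiPsi_from_fs_mor.
      * apply PhiPsi_to_from.
      * apply PhiPsi_from_to.
    + intros F G a H1 H2 G1 G2 Ha1 Ha2 u x.
      destruct (fm_ok a) as [_ [Ha_res _]]. symmetry; apply Ha_res.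
Qed.
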